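(* Let \(S\) be an inverse semigroup with zero and unit and let \(\mathcal G\) be an étale topological groupoid. Then algebraic morphisms \(\mathcal G(S)\curvearrowright\mathcal G\) correspond bijectively to (zero- and unit-preserving) inverse semigroup homomorphisms \(S\to\mathrm{Bis}(\mathcal G)\).
   Context: Inverse semigroups have zero and unit; homomorphisms preserve them. For \(S\), let \(E=E(S)\) be its idempotents, and \(\hat E\) the set of maps \(\varphi\colon E\to\{0,1\}\) with \(\varphi(0)=0\), \(\varphi(1)=1\), \(\varphi(ef)=\varphi(e)\varphi(f)\). Topologise \(\hat E\) by the sets \(U_e=\{\varphi:\varphi(e)=1\}\). \(S\) acts on \(\hat E\) by \(s\cdot\varphi(e)=\varphi(s^*es)\) for \(\varphi\in U_{s^*s}\). \(\mathcal G(S)\) is the groupoid of germs of this action. Objects are \(\hat E\). Arrows are classes \([s,\varphi]\) (\(s\in S\), \(\varphi\in U_{s^*s}\)), with \((s,\varphi)\sim(t,\psi)\) iff \(\varphi=\psi\) and \(se=te\) for some idempotent \(e\) with \(\varphi(e)=1\). The structure maps are \(\mathrm s[s,\varphi]=\varphi\), \(\mathrm r[s,\varphi]=s\cdot\varphi\), \([s,t\cdot\psi][t,\psi]=[st,\psi]\), with the topology generated by the sets \(\{[s,\varphi]:\varphi\in U\}\) for \(U\subseteq U_{s^*s}\) open. A bisection of a topological groupoid is an open subset of the arrow space on which range and source maps are injective and open. A groupoid is étale if its arrow space is covered by bisections. \(\mathrm{Bis}(\mathcal G)\) is the inverse semigroup of bisections, with \(s\cdot t=\{gh:g\in s,h\in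 t, \mathrm s(g)=\mathrm r(h)\}\) and \(s^*=\{g^{-1}:g\in s\}\). Its unit is \(\mathcal G^{(0)}\) and its zero is \(\emptyset\). An action of a groupoid \(\mathcal K\) on a space \(X\) is a continuous anchor \(\varrho\colon X\to\mathcal K^{(0)}\) and a continuous multiplication \((k,x)\mapsto k\cdot x\), defined when \(\mathrm s(k)=\varrho(x)\), with \(\varrho(k\cdot x)=\mathrm r(k)\), associativity when defined, and \(1_{\varrho(x)}\cdot x=x\). An algebraic morphism \(\mathcal K\curvearrowright\mathcal H\) is an action of \(\mathcal K\) on the arrow space \(\mathcal H^{(1)}\) that commutes with the right translation action of \(\mathcal H\) on \(\mathcal H^{(1)}\). That is, \(\varrho(hh')=\varrho(h)\) and \(k\cdot(hh')=(k\cdot h)h'\) whenever defined. *)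

From HB Require Import structures.
From mathcomp Require Import all_boot all_order all_algebra.
From mathcomp Require Import all_classical.
From mathcomp Require Import topology_structure product_topology initial_topology subtype_topology.

Set Implicit Arguments.
Unset Strict Implicit.
Unset Printing Implicit Defensive.
Local Open Scope classical_set_scope.

Record invSG := InvSG {
  isg_car :> Type;
  isg_mul : isg_car -> isg_car -> isg_car;
  isg_star : isg_car -> isg_car;
  isg_zero : isg_car;
  isg_one : isg_car;
  isg_mulA : forall x y z, isg_mul x (isg_mul y z) = isg_mul (isg_mul x y) z;
  isg_inv1 : forall s, isg_mul (isg_mul s (isg_star s)) s = s;
  isg_inv2 : forall s, isg_mul (isg_mul (isg_star s) s) (isg_star s) = isg_star s;
  isg_invU : forall s t, isg_mul (isg_mul s t) s = s ->
                         isg_mul (isg_mul t s) t = t -> t = isg_star s;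
  isg_mul0s : forall s, isg_mul isg_zero s = isg_zero;
  isg_muls0 : forall s, isg_mul s isg_zero = isg_zero;
  isg_mul1s : forall s, isg_mul isg_one s = s;
  isg_muls1 : forall s, isg_mul s isg_one = s
}.

Section InvSGTheory.
Variable S : invSG.
Local Notation m := (@isg_mul S).
Local Notation st := (@isg_star S).
Local Notation mA := (@isg_mulA S).

Lemma isg_starK (s : S) : st (st s) = s.
Proof. by symmetry; apply: isg_invU; [exact: isg_inv2 | exact: isg_inv1]. Qed.

Lemma isg_idem_star (e : S) : m e e = e -> st e = e.
Proof. by move=> He; symmetry; apply: isg_invU; rewrite !He. Qed.

Lemma isg_ss_idem (s : S) : m (m (st s) s) (m (st s) s) = m (st s) s.
Proof. by rewrite mA isg_inv2. Qed.

Lemma isg_idem_r (e r : S) : m e e = e -> m e (m e r) = m e r.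
Proof. by move=> He; rewrite mA He. Qed.

Lemma isg_inv1_r (s r : S) : m s (m (st s) (m s r)) = m s r.
Proof. by rewrite !mA isg_inv1. Qed.

Lemma isg_inv2_r (s r : S) : m (st s) (m s (m (st s) r)) = m (st s) r.
Proof. by rewrite !mA isg_inv2. Qed.

Lemma isg_idem_mul (e f : S) : m e e = e -> m f f = f -> m (m e f) (m e f) = m e f.
Proof.
move=> He Hf; set x := st (m e f).
have I1 : m e (m f (m x (m e f))) = m e f.
  by rewrite [m e (m f _)]mA mA isg_inv1.
have I2 : forall r, m x (m e (m f (m x r))) = m x r.
  by move=> r; rewrite [m e (m f _)]mA isg_inv2_r.
have Hx : m (m f x) e = x.
  apply: isg_invU.
    by rewrite -!mA (isg_idem_r _ Hf) (isg_idem_r _ He) I1.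
  by rewrite -!mA (isg_idem_r _ He) (isg_idem_r _ Hf) I2.
have Hxx : m x x = x.
  by rewrite -{1}Hx -{2}Hx -!mA I2 !mA Hx.
have := isg_idem_star Hxx; rewrite /x isg_starK => ->.
by rewrite -/x.
Qed.

Lemma isg_idem_comm (e f : S) : m e e = e -> m f f = f -> m e f = m f e.
Proof.
move=> He Hf; have Hef := isg_idem_mul He Hf.
have -> : m f e = st (m e f).
  apply: isg_invU.
    by rewrite -!mA (isg_idem_r _ Hf) (isg_idem_r _ He) [m e (m f _)]mA Hef.
  by rewrite -!mA (isg_idem_r _ He) (isg_idem_r _ Hf) [m f (m e _)]mA (isg_idem_mul Hf He).
by rewrite isg_idem_star.
Qed.

Lemma isg_sst_idem (s : S) : m (m s (st s)) (m s (st s)) = m s (st s).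
Proof. by rewrite mA isg_inv1. Qed.

Lemma isg_conj_idem (s e : S) : m e e = e ->
  m (m (st s) (m e s)) (m (st s) (m e s)) = m (st s) (m e s).
Proof.
move=> He; have Hp := isg_sst_idem s.
have Hc := isg_idem_comm He Hp.
rewrite -!mA [m s (m (st s) _)]mA [m e (m (m s (st s)) _)]mA Hc -mA (isg_idem_r _ He).
by rewrite [m (st s) (m (m s (st s)) _)]mA [m (st s) (m s (st s))]mA isg_inv2.
Qed.

Lemma isg_one_idem : m (isg_one S) (isg_one S) = isg_one S.
Proof. exact: isg_mul1s. Qed.

Lemma isg_star1 : st (isg_one S) = isg_one S.
Proof. exact: isg_idem_star isg_one_idem. Qed.

Lemma isg_conj_mul (s e f : S) : m e e = e -> m f f = f ->
  m (st s) (m (m e f) s) = m (m (st s) (m e s)) (m (st s) (m f s)).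
Proof.
move=> He Hf; have Hp := isg_sst_idem s.
have Hc := isg_idem_comm Hf Hp.
rewrite -!mA [m s (m (st s) _)]mA [m (m s (st s)) (m f s)]mA -Hc -mA.
by rewrite [m (m s (st s)) s]isg_inv1.
Qed.

End InvSGTheory.

Definition gen_open (T : Type) (B : set_system T) : set_system T :=
  fun U => forall O : set_system T, O setT -> setI_closed O ->
    (forall (I : Type) (f : I -> set T), (forall i, O (f i)) -> O (\bigcup_i f i)) ->
    B `<=` O -> O U.

Lemma gen_openT T (B : set_system T) : gen_open B setT.
Proof. by move=> O OT. Qed.

Lemma gen_openI T (B : set_system T) : setI_closed (gen_open B).
Proof. move=> U V HU HV O OT OI OU OB; exact: OI (HU O OT OI OU OB) (HV O OT OI OU OB). Qed.

Lemma gen_open_bigU T (B : set_system T) (I : Type) (f : I -> set T) :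
  (forall i, gen_open B (f i)) -> gen_open B (\bigcup_i f i).
Proof. move=> Hf O OT OI OU OB; apply: (OU) => i; exact: Hf i O OT OI OU OB. Qed.

Section Germs.
Variable S : invSG.
Local Notation m := (@isg_mul S).
Local Notation st := (@isg_star S).

Definition Idem : Type := {e : S | m e e = e}.

Definition is_char (phi : Idem -> bool) : Prop :=
  [/\ forall z : Idem, sval z = isg_zero S -> phi z = false,
      forall u : Idem, sval u = isg_one S -> phi u = true &
      forall e f g : Idem, sval g = m (sval e) (sval f) -> phi g = phi e && phi f].

Definition Ehat : Type := {phi : Idem -> bool | is_char phi}.
HB.instance Definition _ := gen_eqMixin Ehat.
HB.instance Definition _ := gen_choiceMixin Ehat.

Definition char_at (phi : Ehat) (e : Idem) : bool := sval phi e.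

Definition Uset (e : Idem) : set Ehat := [set phi | char_at phi e].

Definition Ehat_gens : set_system Ehat := [set U | exists e, U = Uset e].
HB.instance Definition _ := isOpenTopological.Build Ehat
  (@gen_openT _ Ehat_gens) (@gen_openI _ Ehat_gens) (@gen_open_bigU _ Ehat_gens).

Definition ssE (s : S) : Idem := exist _ (m (st s) s) (isg_ss_idem s).
Definition oneE : Idem := exist _ (isg_one S) (@isg_one_idem S).
Definition conjE (s : S) (e : Idem) : Idem :=
  exist _ (m (st s) (m (sval e) s)) (isg_conj_idem s (proj2_sig e)).

Lemma char_val (phi : Ehat) (a b : Idem) : sval a = sval b -> char_at phi a = char_at phi b.
Proof.
case: phi => phi [_ H1 HM] /= Hab.
have -> : phi a = phi b && phi oneE by apply: HM; rewrite /= Hab isg_muls1.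
by rewrite (H1 oneE erefl) andbT.
Qed.

Lemma germ_act_char (s : S) (phi : Ehat) : char_at phi (ssE s) ->
  is_char (fun e => char_at phi (conjE s e)).
Proof.
move=> Hs; case: (proj2_sig phi) => H0 H1 HM; split.
- move=> z Hz; apply: H0 => /=; by rewrite Hz isg_mul0s isg_muls0.
- by move=> u Hu; rewrite -Hs; apply: char_val => /=; rewrite Hu isg_mul1s.
- move=> e f g Hg; apply: HM => /=; rewrite Hg; exact: isg_conj_mul (proj2_sig e) (proj2_sig f).
Qed.

Definition germ_act (s : S) (phi : Ehat) (H : char_at phi (ssE s)) : Ehat :=
  exist _ _ (germ_act_char H).

Definition GP : Type := {p : (S * Ehat)%type | char_at p.2 (ssE p.1)}.

Definition germ_rel (p q : GP) : Prop :=
  (sval p).2 = (sval q).2 /\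
  exists e : Idem, char_at (sval p).2 e /\ m (sval p).1 (sval e) = m (sval q).1 (sval e).

Definition GArr : Type := {A : set GP | exists p, A = germ_rel p}.
HB.instance Definition _ := gen_eqMixin GArr.
HB.instance Definition _ := gen_choiceMixin GArr.

Definition germ (p : GP) : GArr := exist _ (germ_rel p) (ex_intro _ p erefl).
Definition germ' (s : S) (phi : Ehat) (H : char_at phi (ssE s)) : GArr :=
  germ (exist (fun p : (S * Ehat)%type => char_at p.2 (ssE p.1)) (s, phi) H).

Definition grep (g : GArr) : GP := projT1 (cid (proj2_sig g)).

Definition Gsrc (g : GArr) : Ehat := (sval (grep g)).2.
Definition Grng (g : GArr) : Ehat := germ_act (proj2_sig (grep g)).

Lemma unit_ok (phi : Ehat) : char_at phi (ssE (isg_one S)).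
Proof.
case: (proj2_sig phi) => _ H1 _; apply: H1 => /=.
by rewrite isg_star1 isg_mul1s.
Qed.
Definition Gunit (phi : Ehat) : GArr := germ' (unit_ok phi).

(* [s, t.psi] [t, psi] = [st, psi]; the value on non-composable pairs is
   irrelevant (an arbitrary default). *)
Definition Gmul (g h : GArr) : GArr :=
  match pselect (char_at (sval (grep h)).2 (ssE (m (sval (grep g)).1 (sval (grep h)).1))) with
  | left H => germ' H
  | right _ => h
  end.

Lemma inv_ok (s : S) (phi : Ehat) (H : char_at phi (ssE s)) :
  char_at (germ_act H) (ssE (st s)).
Proof.
have -> : char_at (germ_act H) (ssE (st s)) = char_at phi (conjE s (ssE (st s))) by [].
by rewrite (char_val phi (b := ssE s)) //= isg_starK isg_inv1.
Qed.
Definition Ginv (g : GArr) : GArr := germ' (inv_ok (proj2_sig (grep g))).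

Definition GArr_basic : set_system GArr :=
  [set W | exists (s : S) (U : set Ehat), [/\ open U, U `<=` Uset (ssE s) &
     W = [set g | exists phi (H : char_at phi (ssE s)), U phi /\ g = germ' H]]].
HB.instance Definition _ := isOpenTopological.Build GArr
  (@gen_openT _ GArr_basic) (@gen_openI _ GArr_basic) (@gen_open_bigU _ GArr_basic).

End Germs.

Record gpd := Gpd {
  gObj : topologicalType;
  gArr : topologicalType;
  gsrc : gArr -> gObj;
  grng : gArr -> gObj;
  gunit : gObj -> gArr;
  gmul : gArr -> gArr -> gArr;
  ginv : gArr -> gArr
}.

Definition composable (G : gpd) : set (gArr G * gArr G) :=
  [set p | gsrc p.1 = grng p.2].

Definition is_top_groupoid (G : gpd) : Prop :=
  [/\ (forall x : gObj G, gsrc (gunit x) = x /\ grng (gunit x) = x) /\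
      (forall g h : gArr G, gsrc g = grng h ->
         gsrc (gmul g h) = gsrc h /\ grng (gmul g h) = grng g),
      (forall g h k : gArr G, gsrc g = grng h -> gsrc h = grng k ->
         gmul (gmul g h) k = gmul g (gmul h k)),
      (forall g : gArr G, gmul (gunit (grng g)) g = g /\ gmul g (gunit (gsrc g)) = g),
      (forall g : gArr G, [/\ gsrc (ginv g) = grng g, grng (ginv g) = gsrc g,
         gmul g (ginv g) = gunit (grng g) & gmul (ginv g) g = gunit (gsrc g)]) &
      [/\ continuous (@gsrc G), continuous (@grng G), continuous (@gunit G),
          continuous (@ginv G) &
          continuous (fun p : @composable G => gmul (sval p).1 (sval p).2)]].

Definition bisection (G : gpd) (U : set (gArr G)) : Prop :=
  [/\ open U,
      (forall g h : gArr G, U g -> U h -> gsrc g = gsrc h -> g = h),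
      (forall g h : gArr G, U g -> U h -> grng g = grng h -> g = h),
      (forall V : set (gArr G), open V -> V `<=` U -> open (@gsrc G @` V)) &
      (forall V : set (gArr G), open V -> V `<=` U -> open (@grng G @` V))].

Definition etale (G : gpd) : Prop :=
  forall g : gArr G, exists U, bisection U /\ U g.

Definition bis_mul (G : gpd) (U V : set (gArr G)) : set (gArr G) :=
  [set z | exists g h, [/\ U g, V h, gsrc g = grng h & z = gmul g h]].
Definition bis_unit (G : gpd) : set (gArr G) := range (@gunit G).

Definition is_bis_hom (S : invSG) (G : gpd) (theta : S -> set (gArr G)) : Prop :=
  [/\ forall s, bisection (theta s),
      forall s t, theta (isg_mul s t) = bis_mul (theta s) (theta t),
      theta (isg_zero S) = set0 &
      theta (isg_one S) = @bis_unit G].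

(* Algebraic morphisms K ~> H: actions of K on the arrow space of H    *)
(* commuting with the right translation action of H on its arrows.     *)
Definition act_dom (K H : gpd) (rho : gArr H -> gObj K) : set (gArr K * gArr H) :=
  [set p | gsrc p.1 = rho p.2].

Record alg_morph (K H : gpd) := AlgMorph {
  am_rho : gArr H -> gObj K;
  am_act : act_dom am_rho -> gArr H;
  am_rho_cont : continuous am_rho;
  am_act_cont : continuous am_act;
  am_rho_act : forall p : act_dom am_rho, am_rho (am_act p) = grng (sval p).1;
  am_assoc : forall k k' x (H1 : (k', x) \in act_dom am_rho)
      (H2 : (k, am_act (exist _ (k', x) H1)) \in act_dom am_rho)
      (H3 : (gmul k k', x) \in act_dom am_rho),
      am_act (exist _ (k, am_act (exist _ (k', x) H1)) H2) =
      am_act (exist _ (gmul k k', x) H3);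
  am_unit : forall x (H1 : (gunit (am_rho x), x) \in act_dom am_rho),
      am_act (exist _ (gunit (am_rho x), x) H1) = x;
  am_rho_mul : forall h h' : gArr H, gsrc h = grng h' ->
      am_rho (gmul h h') = am_rho h;
  am_act_mul : forall (k : gArr K) (h h' : gArr H) (Hc : gsrc h = grng h')
      (H1 : (k, h) \in act_dom am_rho) (H2 : (k, gmul h h') \in act_dom am_rho),
      gsrc (am_act (exist _ (k, h) H1)) = grng h' /\
      am_act (exist _ (k, gmul h h') H2) = gmul (am_act (exist _ (k, h) H1)) h'
}.

Definition germ_gpd (S : invSG) : gpd :=
  @Gpd (Ehat S) (GArr S) (@Gsrc S) (@Grng S) (@Gunit S) (@Gmul S) (@Ginv S).

Definition corresponds (S : invSG) (G : gpd) (a : alg_morph (germ_gpd S) G)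
  (theta : S -> set (gArr G)) : Prop :=
  forall (s : S) (g : gArr G),
    theta s g <->
    exists (x : gObj G) (Hx : char_at (am_rho a (gunit x)) (ssE s))
           (Hd : (germ' Hx : gArr (germ_gpd S), gunit x) \in act_dom (am_rho a)),
      g = am_act (exist _ (germ' Hx : gArr (germ_gpd S), gunit x) Hd).

From HB Require Import structures.
From mathcomp Require Import all_boot all_order all_algebra.
From mathcomp Require Import all_classical.
From mathcomp Require Import topology_structure product_topology initial_topology subtype_topology.

Set Implicit Arguments.
Unset Strict Implicit.
Unset Printing Implicit Defensive.
Local Open Scope classical_set_scope.

(** An algebraic morphism [a] gives the homomorphism
  [theta s = {[s, rho (1_x)] . 1_x}]: that [theta s] is a bisection comes from
  the groupoid laws together with continuity of the action in an étale
  groupoid, and multiplicativity from the associativity of the action.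
  Conversely a homomorphism [theta] determines an anchor
  [rho g = chi (r g)], where the character [chi x] of [E(S)] sends [e] to
  [1_x \in theta e], and the action [[s, phi] . g = h g], where [h] is the
  unique arrow of the bisection [theta s] with source [r g]; the germ
  relation is respected because [theta (s e)] is the restriction of
  [theta s] to [theta e].  Both constructions are forced by the correspondence,
  which gives uniqueness. *)

Lemma open_locally (T : topologicalType) (A : set T) :
  (forall x, A x -> exists N : set T, [/\ open N, N x & N `<=` A]) -> open A.
Proof.
move=> H; rewrite openE => x /H [N [No Nx NA]].
by rewrite /interior nbhsE; exists N.
Qed.

Lemma openX (T U : topologicalType) (A : set T) (B : set U) :
  open A -> open B -> open (A `*` B).
Proof.
move=> Ao Bo; rewrite openE => -[x y] [/= Ax By].
by exists (A, B) => //; split; apply: open_nbhs_nbhs.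
Qed.

Lemma open_set_val_preimage (T : topologicalType) (D Z : set T) :
  open Z -> open (set_val @^-1` Z : set (set_type D)).
Proof. exact: (continuousP _).1 (@initial_continuous _ T (@set_val T D)) Z. Qed.

Lemma continuous_box (T U V : topologicalType) (D : set (T * U))
  (f : set_type D -> V) : continuous f ->
  forall (p : set_type D) (O : set V), open O -> O (f p) ->
  exists A B, [/\ open A, open B, A (sval p).1, B (sval p).2 &
     forall q : set_type D, A (sval q).1 -> B (sval q).2 -> O (f q)].
Proof.
move=> /continuousP fc p O Oo Ofp; have [Z Zo EZ] := fc O Oo.
have Zp : Z (sval p) by have : (f @^-1` O) p := Ofp; rewrite -EZ.
have : nbhs (sval p) Z by apply: open_nbhs_nbhs.
move=> [[A B] /= [nA nB] sAB].
move: nA nB; rewrite !nbhsE => -[A' [A'o A'p] A'A] [B' [B'o B'p] B'B].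
exists A', B'; split => // q qA qB.
have : (set_val @^-1` Z) q by apply: sAB; split; [apply: A'A | apply: B'B].
by rewrite EZ.
Qed.

(** * Topological groupoids *)

Section Groupoid.
Variable G : gpd.
Hypothesis HG : is_top_groupoid G.
Local Notation src := (@gsrc G).
Local Notation rng := (@grng G).
Local Notation u := (@gunit G).
Local Notation mul := (@gmul G).
Local Notation inv := (@ginv G).

Lemma gsrc_unit x : src (u x) = x.
Proof. by case: HG => [[H _] _ _ _ _]; case: (H x). Qed.
Lemma grng_unit x : rng (u x) = x.
Proof. by case: HG => [[H _] _ _ _ _]; case: (H x). Qed.
Lemma gsrc_mul g h : src g = rng h -> src (mul g h) = src h.
Proof. by case: HG => [[_ H] _ _ _ _] /H []. Qed.
Lemma grng_mul g h : src g = rng h -> rng (mul g h) = rng g.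
Proof. by case: HG => [[_ H] _ _ _ _] /H []. Qed.
Lemma gmulA g h k : src g = rng h -> src h = rng k -> mul (mul g h) k = mul g (mul h k).
Proof. by case: HG => [_ H _ _ _]; apply: H. Qed.
Lemma gmul1g g : mul (u (rng g)) g = g.
Proof. by case: HG => [_ _ H _ _]; case: (H g). Qed.
Lemma gmulg1 g : mul g (u (src g)) = g.
Proof. by case: HG => [_ _ H _ _]; case: (H g). Qed.
Lemma gsrc_inv g : src (inv g) = rng g.
Proof. by case: HG => [_ _ _ H _]; case: (H g). Qed.
Lemma grng_inv g : rng (inv g) = src g.
Proof. by case: HG => [_ _ _ H _]; case: (H g). Qed.
Lemma gmulgV g : mul g (inv g) = u (rng g).
Proof. by case: HG => [_ _ _ H _]; case: (H g). Qed.
Lemma gmulVg g : mul (inv g) g = u (src g).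
Proof. by case: HG => [_ _ _ H _]; case: (H g). Qed.
Lemma gsrc_continuous : continuous src.
Proof. by case: HG => [_ _ _ _ []]. Qed.
Lemma grng_continuous : continuous rng.
Proof. by case: HG => [_ _ _ _ []]. Qed.
Lemma gunit_continuous : continuous u.
Proof. by case: HG => [_ _ _ _ []]. Qed.
Lemma gmul_continuous : continuous (fun p : @composable G => mul (sval p).1 (sval p).2).
Proof. by case: HG => [_ _ _ _ []]. Qed.

Lemma gunit_inj : injective u.
Proof. by move=> x y E; rewrite -(gsrc_unit x) E gsrc_unit. Qed.

Lemma gmul_unitI x : mul (u x) (u x) = u x.
Proof. by have := gmul1g (u x); rewrite grng_unit. Qed.

Lemma gmulI g h h' : src g = rng h -> src g = rng h' -> mul g h = mul g h' -> h = h'.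
Proof.
have invK k : src g = rng k -> mul (inv g) (mul g k) = k.
  by move=> E; rewrite -gmulA ?gsrc_inv ?grng_inv // gmulVg E gmul1g.
by move=> /invK {2}<- /invK {2}<- ->.
Qed.

Lemma gmulIg g h h' : src h = rng g -> src h' = rng g -> mul h g = mul h' g -> h = h'.
Proof.
have invK k : src k = rng g -> mul (mul k g) (inv g) = k.
  by move=> E; rewrite gmulA ?gsrc_inv ?grng_inv // gmulgV -E gmulg1.
by move=> /invK {2}<- /invK {2}<- ->.
Qed.

Lemma gmul_left_unit a k : src a = rng k -> mul a k = k -> a = u (rng k).
Proof. by move=> E Ek; apply: (@gmulIg k) => //; rewrite ?gsrc_unit ?gmul1g. Qed.

Lemma ginv_uniq g b : src g = rng b -> src (mul g b) = rng g ->
  mul (mul g b) g = g -> b = inv g.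
Proof.
move=> E1 E2 /(gmul_left_unit E2) gb.
by apply: (@gmulI g); rewrite ?grng_inv // gb gmulgV.
Qed.

Hypothesis HE : etale G.

Lemma etale_open_src_image (V : set (gArr G)) : open V -> open (src @` V).
Proof.
move=> Vo; apply: open_locally => _ [g Vg <-].
have [B [[Bo _ _ Bs _] Bg]] := HE g.
exists (src @` (V `&` B)); split; last by move=> _ [h [Vh _] <-]; exists h.
- by apply: Bs; [apply: openI | move=> ? []].
- by exists g.
Qed.

Lemma etale_open_rng_image (V : set (gArr G)) : open V -> open (rng @` V).
Proof.
move=> Vo; apply: open_locally => _ [g Vg <-].
have [B [[Bo _ _ _ Br] Bg]] := HE g.
exists (rng @` (V `&` B)); split; last by move=> _ [h [Vh _] <-]; exists h.
- by apply: Br; [apply: openI | move=> ? []].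
- by exists g.
Qed.

Lemma etale_bisectionP (U : set (gArr G)) : open U ->
  (forall g h, U g -> U h -> src g = src h -> g = h) ->
  (forall g h, U g -> U h -> rng g = rng h -> g = h) -> bisection U.
Proof.
by move=> Uo Hs Hr; split => // V Vo _;
  [exact: etale_open_src_image | exact: etale_open_rng_image].
Qed.

End Groupoid.

(** * Identities in inverse semigroups *)

Section InverseSemigroup.
Variable S : invSG.
Local Notation m := (@isg_mul S).
Local Notation st := (@isg_star S).
Local Notation mA := (@isg_mulA S).

Lemma isg_inv1A (s : S) : m s (m (st s) s) = s.
Proof. by rewrite mA isg_inv1. Qed.

Lemma isg_inv2A (s : S) : m (st s) (m s (st s)) = st s.
Proof. by rewrite mA isg_inv2. Qed.

Lemma isg_starM (a b : S) : st (m a b) = m (st b) (st a).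
Proof.
have C := isg_idem_comm (isg_sst_idem b) (isg_ss_idem a).
symmetry; apply: isg_invU.
  have -> : m (m (m a b) (m (st b) (st a))) (m a b) =
            m a (m (m (m b (st b)) (m (st a) a)) b) by rewrite !mA.
  by rewrite C -!mA isg_inv1_r isg_inv1A.
have -> : m (m (m (st b) (st a)) (m a b)) (m (st b) (st a)) =
          m (st b) (m (m (m (st a) a) (m b (st b))) (st a)) by rewrite !mA.
by rewrite -C -!mA isg_inv2_r isg_inv2A.
Qed.

Lemma isg_ssM (s t : S) : m (st (m s t)) (m s t) = m (st t) (m (m (st s) s) t).
Proof. by rewrite isg_starM -!mA. Qed.

Lemma isg_conj_mulr (s e f : S) : m e e = e -> m f f = f ->
  m (st (m s e)) (m f (m s e)) = m (m (st s) (m f s)) e.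
Proof.
move=> He Hf; rewrite isg_starM (isg_idem_star He).
have C := isg_idem_comm He (isg_conj_idem s Hf).
have -> : m (m e (st s)) (m f (m s e)) = m (m e (m (st s) (m f s))) e by rewrite !mA.
by rewrite C -mA He.
Qed.

Lemma isg_conj_mul_ss (t e : S) : m e e = e ->
  m (m (st t) (m e t)) (m (st t) t) = m (st t) (m e t).
Proof. by move=> He; rewrite -!mA isg_inv1A. Qed.

Lemma isg_conjVK (s e : S) : m e e = e ->
  m s (m (m (st s) (m e s)) (st s)) = m e (m s (st s)).
Proof.
move=> He; have C := isg_idem_comm He (isg_sst_idem s).
have -> : m s (m (m (st s) (m e s)) (st s)) = m (m (m s (st s)) e) (m s (st s)).
  by rewrite !mA.
by rewrite -C -mA isg_sst_idem.
Qed.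

Lemma isg_agree_trans (s t v e e' : S) : m e e = e -> m e' e' = e' ->
  m s e = m t e -> m t e' = m v e' -> m s (m e e') = m v (m e e').
Proof.
move=> He He' E1 E2.
by rewrite mA E1 -mA (isg_idem_comm He He') mA E2 -mA.
Qed.

(* Multiplication of germs is well defined: if [s0, t0] agree with [s, t] below
   [e], [e'], then [s0 t0] and [s t] agree below [(t^* e t) e']. *)
Lemma isg_agree_mul (s s0 t t0 e e' : S) : m e e = e -> m e' e' = e' ->
  m s0 e = m s e -> m t0 e' = m t e' ->
  m (m s0 t0) (m (m (st t) (m e t)) e') = m (m s t) (m (m (st t) (m e t)) e').
Proof.
move=> He He' E1 E2; set f := m (st t) (m e t).
have Hf : m f f = f by apply: isg_conj_idem.
have tf r : m r (m t f) = m (m r e) t.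
  have C := isg_idem_comm He (isg_sst_idem t).
  by rewrite /f mA -[m (m r t) _]mA [m t (m (st t) _)]mA [m (m t (st t)) _]mA
    -C -!mA isg_inv1A !mA.
have C' := isg_idem_comm Hf He'.
have L : m (m s0 t) f = m (m s t) f by rewrite -mA tf E1 -tf mA.
transitivity (m (m (m s0 t) f) e'); last by rewrite L -mA.
by rewrite C' mA -(mA s0 t0 e') E2 mA -mA -C' mA.
Qed.

End InverseSemigroup.

(** * The groupoid of germs *)

Section Germs.
Variable S : invSG.
Local Notation m := (@isg_mul S).
Local Notation st := (@isg_star S).

Lemma char_atM (phi : Ehat S) (e f g : Idem S) : sval g = m (sval e) (sval f) ->
  char_at phi g = char_at phi e && char_at phi f.
Proof. by case: phi => phi [_ _ HM] /=; apply: HM. Qed.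

Lemma char_at0 (phi : Ehat S) (z : Idem S) : sval z = isg_zero S -> char_at phi z = false.
Proof. by case: phi => phi [H0 _ _] /=; apply: H0. Qed.

Lemma char_at1 (phi : Ehat S) (z : Idem S) : sval z = isg_one S -> char_at phi z = true.
Proof. by case: phi => phi [_ H1 _] /=; apply: H1. Qed.

Lemma Ehat_ext (phi psi : Ehat S) : (forall e, char_at phi e = char_at psi e) -> phi = psi.
Proof. by case: phi psi => [f Hf] [g Hg] /= E; apply: eq_exist; apply: funext. Qed.

Definition idemM (e f : Idem S) : Idem S :=
  exist _ (m (sval e) (sval f)) (isg_idem_mul (proj2_sig e) (proj2_sig f)).

Lemma char_at_idemM (phi : Ehat S) e f :
  char_at phi (idemM e f) = char_at phi e && char_at phi f.
Proof. exact: char_atM. Qed.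

Lemma char_at_ssM (psi : Ehat S) (s t : S) :
  char_at psi (ssE (m s t)) = char_at psi (conjE t (ssE s)).
Proof. by apply: char_val => /=; rewrite isg_ssM. Qed.

Lemma char_at_ss_ss (psi : Ehat S) (s : S) :
  char_at psi (ssE (m (st s) s)) = char_at psi (ssE s).
Proof. by apply: char_val => /=; rewrite isg_idem_star ?isg_ss_idem // isg_ss_idem. Qed.

Lemma char_at_conj_ss (t : S) (psi : Ehat S) (e : Idem S) :
  char_at psi (conjE t e) -> char_at psi (ssE t).
Proof.
have -> : char_at psi (conjE t e) = char_at psi (idemM (conjE t e) (ssE t)).
  by apply: char_val => /=; rewrite isg_conj_mul_ss //; exact: (proj2_sig e).
by rewrite char_at_idemM => /andP [].
Qed.

Definition gpair (s : S) (phi : Ehat S) (H : char_at phi (ssE s)) : GP S :=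
  exist (fun p : (S * Ehat S)%type => char_at p.2 (ssE p.1)) (s, phi) H.

Lemma germ_rel_refl (p : GP S) : germ_rel p p.
Proof. by split => //; exists (oneE S); split => //; apply: char_at1. Qed.

Lemma germ_rel_sym (p q : GP S) : germ_rel p q -> germ_rel q p.
Proof. by move=> [E [e [He Hm]]]; split => //; exists e; rewrite -E. Qed.

Lemma germ_rel_trans (p q r : GP S) : germ_rel p q -> germ_rel q r -> germ_rel p r.
Proof.
move=> [E1 [e [He H1]]] [E2 [e' [He' H2]]]; split; first by rewrite E1.
exists (idemM e e'); split; first by rewrite char_at_idemM He E1 He'.
by apply: isg_agree_trans H1 H2; [exact: (proj2_sig e) | exact: (proj2_sig e')].
Qed.

Lemma germ_eqP (p q : GP S) : germ p = germ q <-> germ_rel p q.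
Proof.
split => [/(congr1 sval) /= E | H].
  by have : germ_rel q q := germ_rel_refl q; rewrite -E.
apply: eq_exist; apply: funext => r; apply: propext; split; last exact: germ_rel_trans.
by apply: germ_rel_trans; apply: germ_rel_sym.
Qed.

Lemma germ_grep (g : GArr S) : germ (grep g) = g.
Proof.
case: g => A HA; rewrite /grep /=; case: cid => p Hp /=.
by apply: eq_exist; rewrite Hp.
Qed.

Lemma grep_germ_rel (p : GP S) : germ_rel (grep (germ p)) p.
Proof. exact/germ_eqP/germ_grep. Qed.

Lemma germ'_grep (k : GArr S) : k = germ' (proj2_sig (grep k)).
Proof. by rewrite -[LHS]germ_grep; case: (grep k) => [[s phi] H]. Qed.

Lemma germ_act_rel (p q : GP S) : germ_rel p q ->
  germ_act (proj2_sig p) = germ_act (proj2_sig q).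
Proof.
case: p q => [[s phi] H] [[t psi] H'] [/= E [e [He Hm]]]; subst psi.
apply: Ehat_ext => f /=.
have K v : char_at phi (conjE v f) = char_at phi (idemM (conjE v f) e) ->
    char_at phi (conjE v f) = char_at phi (conjE (m v (sval e)) f).
  by move=> ->; apply: char_val => /=; rewrite (isg_conj_mulr _ (proj2_sig e) (proj2_sig f)).
rewrite K; last by rewrite char_at_idemM He andbT.
by rewrite Hm -K // char_at_idemM He andbT.
Qed.

Lemma Gsrc_germ' (s : S) phi (H : char_at phi (ssE s)) : Gsrc (germ' H) = phi.
Proof. by case: (grep_germ_rel (gpair H)). Qed.

Lemma Grng_germ' (s : S) phi (H : char_at phi (ssE s)) : Grng (germ' H) = germ_act H.
Proof. exact: germ_act_rel (grep_germ_rel (gpair H)). Qed.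

Lemma germ'_agree (s t : S) (phi : Ehat S) {Hs : char_at phi (ssE s)}
  {Ht : char_at phi (ssE t)} (e : Idem S) :
  char_at phi e -> m s (sval e) = m t (sval e) -> germ' Hs = germ' Ht.
Proof. by move=> He Hm; apply/germ_eqP; split => //; exists e. Qed.

Lemma germ'_ext (s : S) (phi phi' : Ehat S) (Hs : char_at phi (ssE s))
  (Hs' : char_at phi' (ssE s)) : phi = phi' -> germ' Hs = germ' Hs'.
Proof. by move=> E; subst phi'; rewrite (Prop_irrelevance Hs Hs'). Qed.

Lemma germ_act_ext (s : S) (phi phi' : Ehat S) (H : char_at phi (ssE s))
  (H' : char_at phi' (ssE s)) : phi = phi' -> germ_act H = germ_act H'.
Proof. by move=> E; subst phi'; rewrite (Prop_irrelevance H H'). Qed.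

Lemma germ'_idem (e : Idem S) (phi : Ehat S) (H : char_at phi (ssE (sval e))) :
  char_at phi e -> germ' H = Gunit phi.
Proof.
by move=> He; apply: (germ'_agree He); rewrite isg_mul1s (proj2_sig e).
Qed.

Lemma char_at_act_ssM (s t : S) (psi : Ehat S) (Ht : char_at psi (ssE t)) :
  char_at psi (ssE (m s t)) = char_at (germ_act Ht) (ssE s).
Proof. exact: char_at_ssM. Qed.

Lemma char_at_act_ss_star (s : S) (phi : Ehat S) (H : char_at phi (ssE s)) :
  char_at (germ_act H) (ssE (st s)).
Proof. by rewrite -char_at_act_ssM char_at_ss_ss. Qed.

Lemma Gmul_grep (k k' : GArr S)
  (Hc : char_at (sval (grep k')).2 (ssE (m (sval (grep k)).1 (sval (grep k')).1))) :
  Gmul k k' = germ' Hc.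
Proof. by rewrite /Gmul; case: pselect => [H|//]; rewrite (Prop_irrelevance H Hc). Qed.

Lemma Gmul_germ' (s t : S) (psi : Ehat S) (Ht : char_at psi (ssE t))
  (Hs : char_at (germ_act Ht) (ssE s)) (Hst : char_at psi (ssE (m s t))) :
  Gmul (germ' Hs) (germ' Ht) = germ' Hst.
Proof.
have Rs := grep_germ_rel (gpair Hs); have Rt := grep_germ_rel (gpair Ht).
have Rw := germ_act_rel Rt.
move: Rs Rt Rw; rewrite /Gmul /germ' /=.
case: (grep (germ (gpair Hs))) => [[s0 phi0] H0].
case: (grep (germ (gpair Ht))) => [[t0 psi0] H0'] Rs Rt /= Rw.
case: Rs Rt => /= E1 [e [He1 Hm1]] [/= E2 [e' [He2 Hm2]]]; subst psi0 phi0.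
case: pselect => /= [H|[]]; last by rewrite char_at_act_ssM Rw.
apply/germ_eqP; split => //; exists (idemM (conjE t e) e'); split.
  by rewrite char_at_idemM He2 andbT.
by apply: isg_agree_mul; [exact: (proj2_sig e) | exact: (proj2_sig e') | |].
Qed.

End Germs.

Section GermTopology.
Variable S : invSG.

Lemma open_Uset (e : Idem S) : open (Uset e).
Proof. by move=> O _ _ _ OB; apply: OB; exists e. Qed.

Lemma continuous_to_Ehat (X : topologicalType) (f : X -> Ehat S) :
  (forall e, open (f @^-1` Uset e)) -> continuous f.
Proof.
move=> H; apply/continuousP => A Ao.
apply: (Ao (fun V => open (f @^-1` V))).
- by rewrite preimage_setT; apply: openT.
- by move=> U V HU HV; rewrite preimage_setI; apply: openI.
- by move=> I F HF; rewrite preimage_bigcup; apply: bigcup_open => i _; exact: HF.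
- by move=> _ [e ->]; apply: H.
Qed.

Definition germ_set (s : S) (U : set (Ehat S)) : set (GArr S) :=
  [set g | exists phi (H : char_at phi (ssE s)), U phi /\ g = germ' H].

Lemma open_germ_set (s : S) (U : set (Ehat S)) : open U -> U `<=` Uset (ssE s) ->
  open (germ_set s U).
Proof.
move=> Uo sU; change (gen_open (@GArr_basic S) (germ_set s U)).
by move=> O _ _ _ OB; apply: OB; exists s, U; split.
Qed.

Lemma germ_nbhs (A : set (GArr S)) : open A ->
  forall (s : S) (phi0 : Ehat S) (H0 : char_at phi0 (ssE s)), A (germ' H0) ->
  exists U : set (Ehat S), [/\ open U, U phi0 &
    forall phi (H : char_at phi (ssE s)), U phi -> A (germ' H)].
Proof.
move=> Ao; apply: (Ao (fun A => forall s phi0 (H0 : char_at phi0 (ssE s)), A (germ' H0) ->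
  exists U : set (Ehat S), [/\ open U, U phi0 &
    forall phi (H : char_at phi (ssE s)), U phi -> A (germ' H)])).
- by move=> s phi0 H0 _; exists setT; split => //; apply: openT.
- move=> V W HV HW s phi0 H0 [/HV [U1 [U1o U1p H1]] /HW [U2 [U2o U2p H2]]].
  exists (U1 `&` U2); split => //; first exact: openI.
  by move=> phi H [/H1 ? /H2 ?].
- move=> I F HF s phi0 H0 [i _ /HF [U [Uo Up HU]]].
  by exists U; split => // phi H /HU ?; exists i.
- move=> _ [t [U' [U'o sU' ->]]] s phi0 H0 [psi [Ht [U'psi /esym/germ_eqP E]]].
  have [/= E1 [e [He Hm]]] := E; subst psi.
  exists (U' `&` Uset e); split => //; first by apply: openI => //; apply: open_Uset.
  move=> phi H [U'phi Phie]; exists phi, (sU' _ U'phi); split => //.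
  by apply: (germ'_agree Phie); rewrite Hm.
Qed.

End GermTopology.

(** * From algebraic morphisms to homomorphisms *)

Section MorphToHom.
Variable S : invSG.
Variable G : gpd.
Hypothesis HG : is_top_groupoid G.
Variable a : alg_morph (germ_gpd S) G.
Local Notation m := (@isg_mul S).
Local Notation st := (@isg_star S).
Local Notation src := (@gsrc G).
Local Notation rng := (@grng G).
Local Notation u := (@gunit G).
Local Notation mul := (@gmul G).
Local Notation inv := (@ginv G).
Local Notation rho := (am_rho a).

(* The action extended by [g] outside its domain, to avoid carrying domain proofs. *)
Definition am_app (k : GArr S) (g : gArr G) : gArr G :=
  match pselect ((k, g) \in act_dom rho) with
  | left H => am_act (a := a) (exist _ (k, g) H)
  | right _ => g
  end.

Lemma am_appE k g H : am_app k g = am_act (a := a) (exist _ (k, g) H).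
Proof. by rewrite /am_app; case: pselect => [H'|//]; rewrite (Prop_irrelevance H H'). Qed.

Lemma in_act_dom (k : GArr S) g : Gsrc k = rho g -> (k, g) \in act_dom rho.
Proof. by rewrite in_setE. Qed.

Lemma am_rho_app k g : Gsrc k = rho g -> rho (am_app k g) = Grng k.
Proof. by move=> /in_act_dom H; rewrite (am_appE H); apply: am_rho_act. Qed.

Lemma am_app_assoc k k' x : Gsrc k' = rho x -> Gsrc k = rho (am_app k' x) ->
  Gsrc (Gmul k k') = rho x -> am_app k (am_app k' x) = am_app (Gmul k k') x.
Proof.
move=> /in_act_dom H1; rewrite (am_appE H1) => /in_act_dom H2 /in_act_dom H3.
by rewrite (am_appE H2) (am_appE H3); apply: am_assoc.
Qed.

Lemma am_app_unit x : am_app (Gunit (rho x)) x = x.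
Proof.
have H : (Gunit (rho x) : gArr (germ_gpd S), x) \in act_dom rho.
  by apply: in_act_dom; rewrite /Gunit Gsrc_germ'.
by rewrite (am_appE H); apply: am_unit.
Qed.

Lemma am_app_mul k h h' : Gsrc k = rho h -> src h = rng h' ->
  src (am_app k h) = rng h' /\ am_app k (mul h h') = mul (am_app k h) h'.
Proof.
move=> E Hc; have H1 := in_act_dom E.
have H2 : (k, mul h h') \in act_dom rho by apply: in_act_dom; rewrite am_rho_mul.
by rewrite (am_appE H1) (am_appE H2); apply: am_act_mul.
Qed.

Lemma am_rho_unit g : rho (u (rng g)) = rho g.
Proof. by rewrite -{2}(gmul1g HG g) am_rho_mul // (gsrc_unit HG). Qed.

Definition bis_arrow (s : S) x (Hx : char_at (rho (u x)) (ssE s)) : gArr G :=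
  am_app (germ' Hx) (u x).

Definition bis_of_morph (s : S) : set (gArr G) := fun g =>
  exists (x : gObj G) (Hx : char_at (am_rho a (gunit x)) (ssE s))
    (Hd : (germ' Hx : gArr (germ_gpd S), gunit x) \in act_dom (am_rho a)),
    g = am_act (exist _ (germ' Hx : gArr (germ_gpd S), gunit x) Hd).

Lemma bis_of_morphP s g : bis_of_morph s g <-> exists x Hx, g = @bis_arrow s x Hx.
Proof.
split => [[x [Hx [Hd ->]]]|[x [Hx ->]]]; exists x, Hx; first by rewrite /bis_arrow (am_appE Hd).
have Hd := in_act_dom (Gsrc_germ' Hx).
by exists Hd; rewrite /bis_arrow (am_appE Hd).
Qed.

Lemma gsrc_bis_arrow s x Hx : src (@bis_arrow s x Hx) = x.
Proof.
have Hc : src (u x) = rng (u x) by rewrite (gsrc_unit HG) (grng_unit HG).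
have [-> _] := am_app_mul (Gsrc_germ' Hx) Hc.
exact: grng_unit.
Qed.

Lemma am_rho_bis_arrow s x Hx : rho (@bis_arrow s x Hx) = germ_act Hx.
Proof. by rewrite /bis_arrow am_rho_app ?Grng_germ' // Gsrc_germ'. Qed.

Lemma bis_arrow_ext s x Hx Hx' : @bis_arrow s x Hx = @bis_arrow s x Hx'.
Proof. by rewrite (Prop_irrelevance Hx Hx'). Qed.

Lemma bis_arrow_mul (s t : S) x (Hx : char_at (rho (u x)) (ssE t))
  (Hs : char_at (germ_act Hx) (ssE s)) (Hst : char_at (rho (u x)) (ssE (m s t)))
  y (Hy : char_at (rho (u y)) (ssE s)) : y = rng (bis_arrow Hx) ->
  mul (bis_arrow Hy) (bis_arrow Hx) = bis_arrow Hst.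
Proof.
move=> Ey.
have ry : rho (u y) = germ_act Hx by rewrite Ey am_rho_unit am_rho_bis_arrow.
have E1 : Gsrc (germ' Hy) = rho (u y) by rewrite Gsrc_germ'.
have E2 : src (u y) = rng (bis_arrow Hx) by rewrite (gsrc_unit HG).
have [_ <-] := am_app_mul E1 E2.
have -> : mul (u y) (bis_arrow Hx) = bis_arrow Hx by rewrite Ey (gmul1g HG).
rewrite (germ'_ext Hy Hs ry) /bis_arrow am_app_assoc ?Gmul_germ' ?Gsrc_germ' //.
by rewrite -/(bis_arrow Hx) am_rho_bis_arrow.
Qed.

Lemma bis_of_morphM (s t : S) :
  bis_of_morph (m s t) = bis_mul (bis_of_morph s) (bis_of_morph t).
Proof.
apply: funext => g; apply: propext; split.
  move/bis_of_morphP => [x [Hx ->]].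
  have Ht : char_at (rho (u x)) (ssE t).
    by apply: (@char_at_conj_ss _ _ _ (ssE s)); rewrite -char_at_ssM.
  have Hs : char_at (germ_act Ht) (ssE s) by rewrite -char_at_act_ssM.
  have Hy : char_at (rho (u (rng (bis_arrow Ht)))) (ssE s).
    by rewrite am_rho_unit am_rho_bis_arrow.
  exists (bis_arrow Hy), (bis_arrow Ht); split.
  - by apply/bis_of_morphP; exists (rng (bis_arrow Ht)), Hy.
  - by apply/bis_of_morphP; exists x, Ht.
  - by rewrite gsrc_bis_arrow.
  - by rewrite (bis_arrow_mul Hs Hx Hy).
move=> [_ [_ [/bis_of_morphP [y [Hy ->]] /bis_of_morphP [x [Hx ->]] Hc ->]]].
have Ey : y = rng (bis_arrow Hx) by rewrite -Hc gsrc_bis_arrow.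
have Hs : char_at (germ_act Hx) (ssE s).
  by rewrite -am_rho_bis_arrow -am_rho_unit -Ey.
have Hst : char_at (rho (u x)) (ssE (m s t)) by rewrite char_at_act_ssM.
by apply/bis_of_morphP; exists x, Hst; rewrite (bis_arrow_mul Hs Hst Hy).
Qed.

Lemma bis_of_morph0 : bis_of_morph (isg_zero S) = set0.
Proof.
apply: funext => g; apply: propext; split => // /bis_of_morphP [x [Hx _]].
by move: Hx; rewrite char_at0 //= isg_muls0.
Qed.

Lemma bis_of_morph1 : bis_of_morph (isg_one S) = @bis_unit G.
Proof.
apply: funext => g; apply: propext; split.
  move=> /bis_of_morphP [x [Hx ->]]; exists x => //.
  by rewrite /bis_arrow (Prop_irrelevance Hx (unit_ok _)) -/(Gunit _) am_app_unit.
move=> [x _ <-]; apply/bis_of_morphP; exists x, (unit_ok _).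
by rewrite /bis_arrow -/(Gunit _) am_app_unit.
Qed.

Lemma bis_of_morph_src_inj s g h :
  bis_of_morph s g -> bis_of_morph s h -> src g = src h -> g = h.
Proof.
move=> /bis_of_morphP [x [Hx ->]] /bis_of_morphP [y [Hy ->]].
by rewrite !gsrc_bis_arrow => E; subst y; exact: bis_arrow_ext.
Qed.

Lemma bis_arrowK (s : S) x (Hx : char_at (rho (u x)) (ssE s)) :
  am_app (germ' (char_at_act_ss_star Hx)) (bis_arrow Hx) = u x.
Proof.
have Hst : char_at (rho (u x)) (ssE (m (st s) s)) by rewrite char_at_ss_ss.
have Hmul := Gmul_germ' (char_at_act_ss_star Hx) Hst.
rewrite /bis_arrow am_app_assoc ?Hmul ?Gsrc_germ' -?/(bis_arrow Hx) ?am_rho_bis_arrow //.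
have H' : char_at (rho (u x)) (ssE (sval (ssE s))) := Hst.
by rewrite (Prop_irrelevance Hst H') (germ'_idem H') // am_app_unit.
Qed.

Lemma bis_of_morph_rng_inj s g h :
  bis_of_morph s g -> bis_of_morph s h -> rng g = rng h -> g = h.
Proof.
move=> /bis_of_morphP [x [Hx ->]] /bis_of_morphP [y [Hy ->]] E.
set fx := bis_arrow Hx; set fy := bis_arrow Hy; set c := mul (inv fx) fy.
have Ekx : germ' (char_at_act_ss_star Hx) = germ' (char_at_act_ss_star Hy).
  by apply: germ'_ext; rewrite -!am_rho_bis_arrow -(am_rho_unit fx) -/fx E am_rho_unit.
have Efy : fy = mul fx c.
  rewrite /c -(gmulA HG) ?(gsrc_inv HG) ?(grng_inv HG) //.
  by rewrite (gmulgV HG) E (gmul1g HG).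
have Sk : Gsrc (germ' (char_at_act_ss_star Hx)) = rho fx.
  by rewrite Gsrc_germ' am_rho_bis_arrow.
have Sc : src fx = rng c by rewrite /c (grng_mul HG) ?(grng_inv HG) // (gsrc_inv HG) E.
have [_ K] := am_app_mul Sk Sc.
have Ey : u y = c.
  rewrite -(bis_arrowK Hy) -/fy -Ekx Efy K (bis_arrowK Hx).
  by rewrite -{2}(gmul1g HG c) -Sc gsrc_bis_arrow.
have yx : y = x.
  rewrite -(grng_unit HG y) Ey /c (grng_mul HG) ?(grng_inv HG) ?gsrc_bis_arrow //.
  by rewrite (gsrc_inv HG) E.
by subst y; exact: bis_arrow_ext.
Qed.

Lemma bis_arrow_near s x0 (H0 : char_at (rho (u x0)) (ssE s)) (V : set (gArr G)) :
  open V -> V (bis_arrow H0) ->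
  exists2 W : set (gObj G), open W /\ W x0 &
    forall x (Hx : char_at (rho (u x)) (ssE s)), W x -> V (bis_arrow Hx).
Proof.
move=> Vo; have Hd := in_act_dom (Gsrc_germ' H0); rewrite /bis_arrow (am_appE Hd) => Vp.
have [A [B [Ao Bo Ak Bu HAB]]] := continuous_box (am_act_cont (a := a)) Vo Vp.
have [U [Uo Ux HU]] := germ_nbhs Ao Ak.
exists (u @^-1` (rho @^-1` U `&` B)); last first.
  move=> x Hx [Ux' Bx]; rewrite /bis_arrow (am_appE (in_act_dom (Gsrc_germ' Hx))).
  by apply: HAB => /=; [exact: HU | exact: Bx].
split => //; apply: (continuousP _).1 (gunit_continuous HG) _ _.
by apply: openI => //; exact: (continuousP _).1 (am_rho_cont (a := a)) _ Uo.
Qed.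

Hypothesis HE : etale G.

(* A bisection around an arrow [[s, rho (1_x0)] . 1_x0] meets [bis_of_morph s]
   in an open set, by injectivity of the source map on it. *)
Lemma open_bis_of_morph s : open (bis_of_morph s).
Proof.
apply: open_locally => g /bis_of_morphP [x0 [H0 ->]].
have [V [[Vo Vsrc _ _ _] Vg]] := HE (bis_arrow H0).
have [W [Wo Wx] HW] := bis_arrow_near Vo Vg.
set D := W `&` u @^-1` (rho @^-1` Uset (ssE s)).
have Do : open D.
  apply: openI Wo _; apply: (continuousP _).1 (gunit_continuous HG) _ _.
  exact: (continuousP _).1 (am_rho_cont (a := a)) _ (open_Uset _).
exists (V `&` src @^-1` D); split.
- by apply: openI => //; exact: (continuousP _).1 (gsrc_continuous HG) _ Do.
- by split => //; rewrite /= gsrc_bis_arrow.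
move=> h [Vh [Wh Sh]]; apply/bis_of_morphP; exists (src h), Sh.
by apply: Vsrc => //; [exact: HW | rewrite gsrc_bis_arrow].
Qed.

Lemma bis_of_morph_hom : is_bis_hom bis_of_morph.
Proof.
split.
- move=> s; apply: (etale_bisectionP HE); first exact: open_bis_of_morph.
    exact: bis_of_morph_src_inj.
  exact: bis_of_morph_rng_inj.
- exact: bis_of_morphM.
- exact: bis_of_morph0.
- exact: bis_of_morph1.
Qed.

End MorphToHom.

(** * From homomorphisms to algebraic morphisms *)

Section HomToMorph.
Variable S : invSG.
Variable G : gpd.
Hypothesis HG : is_top_groupoid G.
Variable theta : S -> set (gArr G).
Hypothesis Hth : is_bis_hom theta.
Local Notation m := (@isg_mul S).
Local Notation st := (@isg_star S).
Local Notation mA := (@isg_mulA S).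
Local Notation src := (@gsrc G).
Local Notation rng := (@grng G).
Local Notation u := (@gunit G).
Local Notation mul := (@gmul G).
Local Notation inv := (@ginv G).

Lemma hom_bisection s : bisection (theta s). Proof. by case: Hth. Qed.
Lemma hom_src_inj s g h : theta s g -> theta s h -> src g = src h -> g = h.
Proof. by case: (hom_bisection s) => _ H _ _ _; apply: H. Qed.
Lemma hom_rng_inj s g h : theta s g -> theta s h -> rng g = rng h -> g = h.
Proof. by case: (hom_bisection s) => _ _ H _ _; apply: H. Qed.
Lemma homM s t : theta (m s t) = bis_mul (theta s) (theta t). Proof. by case: Hth. Qed.
Lemma hom0 : theta (isg_zero S) = set0. Proof. by case: Hth. Qed.
Lemma hom1 : theta (isg_one S) = @bis_unit G. Proof. by case: Hth. Qed.

Lemma hom_mul_mem s t g h :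
  theta s g -> theta t h -> src g = rng h -> theta (m s t) (mul g h).
Proof. by move=> Tg Th E; rewrite homM; exists g, h. Qed.

Lemma hom_idem_unit (e : S) k : m e e = e -> theta e k -> k = u (rng k).
Proof.
move=> He Tk; have : theta (m e e) k by rewrite He.
rewrite homM => -[b [c [Tb Tc Hc Ek]]].
have ck : c = k by apply: (hom_src_inj Tc Tk); rewrite Ek (gsrc_mul HG).
subst c; have Eb := gmul_left_unit HG Hc (esym Ek); subst b.
by symmetry; apply: (hom_rng_inj Tb Tk); rewrite (grng_unit HG).
Qed.

Lemma hom_restrict (s e : S) h : m e e = e -> theta (m s e) h -> theta s h.
Proof.
move=> He; rewrite homM => -[b [c [Tb Tc Hc ->]]].
by rewrite (hom_idem_unit He Tc) -Hc (gmulg1 HG).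
Qed.

Lemma hom_inv_mem s g : theta s g -> theta (st s) (inv g).
Proof.
move=> Tg; have : theta (m (m s (st s)) s) g by rewrite isg_inv1.
rewrite homM => -[bc [d [Tbc Td Hc Eg]]].
move: Tbc; rewrite homM => -[b [c [Tb Tc Hbc Ebc]]].
have dg : d = g by apply: (hom_src_inj Td Tg); rewrite Eg (gsrc_mul HG).
subst d; have bg : b = g.
  by apply: (hom_rng_inj Tb Tg); rewrite Eg (grng_mul HG) // Ebc (grng_mul HG).
by subst b bc; rewrite -(ginv_uniq HG Hbc Hc).
Qed.

Lemma hom_unit_src_mem s h : theta s h -> theta (m (st s) s) (u (src h)).
Proof.
move=> Th; rewrite -(gmulVg HG); apply: hom_mul_mem => //; first exact: hom_inv_mem.
by rewrite (gsrc_inv HG).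
Qed.

Lemma hom_unit_src_memP s x : theta (m (st s) s) (u x) -> exists h, theta s h /\ src h = x.
Proof.
rewrite homM => -[b [c [Tb Tc Hc E]]]; exists c; split => //.
by rewrite -(gsrc_unit HG x) E (gsrc_mul HG).
Qed.

Definition unit_char_fun (x : gObj G) : Idem S -> bool :=
  fun e => `[< theta (sval e) (u x) >].

Lemma unit_char_fun_is_char x : is_char (unit_char_fun x).
Proof.
split.
- by move=> z Hz; rewrite /unit_char_fun Hz hom0; apply/negbTE/asboolPn.
- by move=> z Hz; rewrite /unit_char_fun Hz hom1; apply/asboolP; exists x.
move=> e f g Hg; rewrite /unit_char_fun Hg; apply/asboolP/andP.
  rewrite homM => -[b [c [Tb Tc Hc E]]].
  have Eb := hom_idem_unit (proj2_sig e) Tb; have Ec := hom_idem_unit (proj2_sig f) Tc.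
  have rbc : rng b = rng c by rewrite -Hc Eb (gsrc_unit HG) (grng_unit HG).
  have xb : x = rng b.
    by apply: (gunit_inj HG); rewrite E Ec -rbc -Eb Eb (gmul_unitI HG) -Eb.
  by split; apply/asboolP; [rewrite xb -Eb | rewrite xb rbc -Ec].
move=> [/asboolP Te /asboolP Tf]; rewrite -(gmul_unitI HG); apply: hom_mul_mem => //.
by rewrite (gsrc_unit HG) (grng_unit HG).
Qed.

Definition unit_char (x : gObj G) : Ehat S := exist _ _ (unit_char_fun_is_char x).

Lemma unit_charE x (e : Idem S) : char_at (unit_char x) e <-> theta (sval e) (u x).
Proof. by rewrite /char_at /= /unit_char_fun; split => /asboolP. Qed.

Lemma unit_char_continuous : continuous unit_char.
Proof.
apply: continuous_to_Ehat => e.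
have -> : unit_char @^-1` Uset e = u @^-1` theta (sval e).
  by apply: funext => x; apply: propext; exact: unit_charE.
by apply: (continuousP _).1 (gunit_continuous HG) _ _; case: (hom_bisection (sval e)).
Qed.

Lemma unit_char_src s h (Th : theta s h) : char_at (unit_char (src h)) (ssE s).
Proof. exact/unit_charE/hom_unit_src_mem. Qed.

(* Conjugating an idempotent [e] by [s] transports [1_(r h) \in theta e] to
   [1_(s h) \in theta (s^* e s)], along any [h] in [theta s]. *)
Lemma unit_char_rng s h (Th : theta s h) : unit_char (rng h) = germ_act (unit_char_src Th).
Proof.
apply: Ehat_ext => e /=; apply/idP/idP => /unit_charE T; apply/unit_charE.
  have T1 : theta (m (st s) (sval e)) (mul (inv h) (u (rng h))).
    by apply: hom_mul_mem => //; [exact: hom_inv_mem | rewrite (gsrc_inv HG) (grng_unit HG)].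
  have T2 : theta (m (m (st s) (sval e)) s) (mul (mul (inv h) (u (rng h))) h).
    apply: hom_mul_mem => //.
    by rewrite (gsrc_mul HG) ?(gsrc_unit HG) // (gsrc_inv HG) (grng_unit HG).
  by move: T2; rewrite -(gsrc_inv HG) (gmulg1 HG) (gmulVg HG) -mA.
have T1 : theta (m s (m (st s) (m (sval e) s))) (mul h (u (src h))).
  by apply: hom_mul_mem => //; rewrite (grng_unit HG).
have T2 : theta (m (m s (m (st s) (m (sval e) s))) (st s)) (mul (mul h (u (src h))) (inv h)).
  apply: hom_mul_mem => //; first exact: hom_inv_mem.
  by rewrite (gsrc_mul HG) ?(grng_unit HG) // (gsrc_unit HG) (grng_inv HG).
move: T2; rewrite (gmulg1 HG) (gmulgV HG) -mA isg_conjVK; last exact: (proj2_sig e).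
by apply: hom_restrict; exact: isg_sst_idem.
Qed.

Definition hom_anchor (g : gArr G) : Ehat S := unit_char (rng g).

Lemma hom_anchor_continuous : continuous hom_anchor.
Proof.
apply/continuousP => A Ao.
exact: (continuousP _).1 (grng_continuous HG) _ ((continuousP _).1 unit_char_continuous _ Ao).
Qed.

Lemma hom_anchor_mul h h' : src h = rng h' -> hom_anchor (mul h h') = hom_anchor h.
Proof. by move=> E; rewrite /hom_anchor (grng_mul HG). Qed.

(* The arrow of [theta s] with source [x] (junk value [1_x] if there is none). *)
Definition hom_arrow (s : S) (x : gObj G) : gArr G :=
  match pselect (exists h, theta s h /\ src h = x) with
  | left H => sval (cid H)
  | right _ => u x
  end.

Lemma hom_arrowP s x h : theta s h -> src h = x -> hom_arrow s x = h.
Proof.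
move=> Th Eh; rewrite /hom_arrow; case: pselect => [H|[]]; last by exists h.
by case: cid => h' [Th' Eh'] /=; apply: (hom_src_inj Th' Th); rewrite Eh Eh'.
Qed.

Lemma hom_arrow_grep (k : GArr S) g : Gsrc k = hom_anchor g ->
  theta (sval (grep k)).1 (hom_arrow (sval (grep k)).1 (rng g)) /\
  src (hom_arrow (sval (grep k)).1 (rng g)) = rng g.
Proof.
rewrite /Gsrc => E; have := proj2_sig (grep k); rewrite E.
by move=> /unit_charE /hom_unit_src_memP [h [Th Eh]]; rewrite (hom_arrowP Th Eh).
Qed.

(* The arrow selected for a germ does not depend on its representative, because
   [theta (s e)] is the restriction of [theta s] to [theta e]. *)
Lemma hom_arrow_germ' (k : GArr S) (s : S) phi (Hs : char_at phi (ssE s)) g h :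
  k = germ' Hs -> Gsrc k = hom_anchor g -> theta s h -> src h = rng g ->
  hom_arrow (sval (grep k)).1 (rng g) = h.
Proof.
move=> Ek Es Th Eh; apply: hom_arrowP => //.
have := grep_germ_rel (gpair Hs); rewrite -/(germ' Hs) -Ek.
case: (grep k) => [[s0 phi0] H0] [/= E0 [e [He Hm]]]; subst phi0.
have Hp : phi = hom_anchor g by rewrite -Es Ek Gsrc_germ'.
have Tu : theta (sval e) (u (rng g)) by apply/unit_charE; rewrite -/(hom_anchor g) -Hp.
have Te : theta (m s (sval e)) h.
  by rewrite -(gmulg1 HG h) Eh; apply: hom_mul_mem => //; rewrite (grng_unit HG).
by rewrite -Hm in Te; exact: hom_restrict (proj2_sig e) Te.
Qed.

Local Notation hom_dom := (set_type (act_dom (K := germ_gpd S) hom_anchor)).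

Definition hom_act (p : hom_dom) : gArr G :=
  mul (hom_arrow (sval (grep (sval p).1)).1 (rng (sval p).2)) (sval p).2.

Lemma hom_dom_src (p : hom_dom) : Gsrc (sval p).1 = hom_anchor (sval p).2.
Proof. by case: p => [[k g] /= H]; move: H; rewrite in_setE. Qed.

Lemma hom_anchor_act (p : hom_dom) : hom_anchor (hom_act p) = Grng (sval p).1.
Proof.
have [Th Eh] := hom_arrow_grep (hom_dom_src p).
rewrite /hom_act hom_anchor_mul // /hom_anchor /Grng (unit_char_rng Th).
by apply: germ_act_ext; rewrite Eh; symmetry; exact: hom_dom_src.
Qed.

Lemma hom_act_assoc (k k' : gArr (germ_gpd S)) (x : gArr G)
  (H1 : (k', x) \in act_dom (K := germ_gpd S) hom_anchor)
  (H2 : (k, hom_act (exist _ (k', x) H1)) \in act_dom (K := germ_gpd S) hom_anchor)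
  (H3 : (gmul k k', x) \in act_dom (K := germ_gpd S) hom_anchor) :
  hom_act (exist _ (k, hom_act (exist _ (k', x) H1)) H2) =
  hom_act (exist _ (gmul k k', x) H3).
Proof.
have E1 := hom_dom_src (exist _ (k', x) H1).
have E2 := hom_dom_src (exist _ (k, hom_act (exist _ (k', x) H1)) H2).
have E3 := hom_dom_src (exist _ (gmul k k', x) H3).
have R2 := hom_anchor_act (exist _ (k', x) H1).
move: E1 E2 E3 R2; rewrite /hom_act /= => E1 E2 E3 R2.
have [Th' Eh'] := hom_arrow_grep E1.
move: Th' Eh' E2 E3 R2; set s' := (sval (grep k')).1; set h' := hom_arrow s' (rng x).
move=> Th' Eh' E2 E3 R2.
have [Th Eh] := hom_arrow_grep E2.
move: Th Eh; set s := (sval (grep k)).1; rewrite (grng_mul HG) //.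
set h := hom_arrow s (rng h') => Th Eh.
have Hc : char_at (sval (grep k')).2 (ssE (m s s')).
  rewrite (char_at_act_ssM _ (proj2_sig (grep k'))) -/(Grng k') -R2 -E2.
  exact: (proj2_sig (grep k)).
rewrite (hom_arrow_germ' (Gmul_grep Hc) E3 (h := mul h h')).
- by rewrite (gmulA HG) // (grng_mul HG).
- exact: hom_mul_mem.
- by rewrite (gsrc_mul HG).
Qed.

Lemma hom_act_unit (x : gArr G)
  (H1 : (gunit (g := germ_gpd S) (hom_anchor x), x) \in act_dom (K := germ_gpd S) hom_anchor) :
  hom_act (exist _ (gunit (g := germ_gpd S) (hom_anchor x), x) H1) = x.
Proof.
have E1 := hom_dom_src (exist _ (gunit (g := germ_gpd S) (hom_anchor x), x) H1).
rewrite /hom_act /=; move: E1 => /= E1.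
rewrite (hom_arrow_germ' (erefl : Gunit (hom_anchor x) = germ' (unit_ok _)) E1 (h := u (rng x))).
- exact: (gmul1g HG).
- by rewrite hom1; exists (rng x).
- exact: (gsrc_unit HG).
Qed.

Lemma hom_act_mul (k : gArr (germ_gpd S)) (h h' : gArr G) (Hc : src h = rng h')
  (H1 : (k, h) \in act_dom (K := germ_gpd S) hom_anchor)
  (H2 : (k, mul h h') \in act_dom (K := germ_gpd S) hom_anchor) :
  src (hom_act (exist _ (k, h) H1)) = rng h' /\
  hom_act (exist _ (k, mul h h') H2) = mul (hom_act (exist _ (k, h) H1)) h'.
Proof.
have [Th Eh] := hom_arrow_grep (hom_dom_src (exist _ (k, h) H1)).
rewrite /hom_act /= (grng_mul HG) //; split; first by rewrite (gsrc_mul HG).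
by rewrite (gmulA HG).
Qed.

Lemma hom_act_continuous : continuous hom_act.
Proof.
apply/continuousP => O Oo.
set Z : set (GArr S * gArr G) := fun p => exists N : set (GArr S * gArr G),
  [/\ open N, N p & forall q : hom_dom, N (sval q) -> O (hom_act q)].
have Zo : open Z.
  by apply: open_locally => p [N [No Np HN]]; exists N; split => // p' Np'; exists N.
have -> : hom_act @^-1` O = set_val @^-1` Z; last exact: open_set_val_preimage.
apply: funext => q; apply: propext; split; last by move=> [N [_ Nq HN]]; exact: HN.
move=> Oq; have [Th0 Eh0] := hom_arrow_grep (hom_dom_src q).
move: Th0 Eh0 Oq; rewrite /hom_act.
set s := (sval (grep (sval q).1)).1; set h0 := hom_arrow s (rng (sval q).2) => Th0 Eh0 Oq.
have Hcp : (h0, (sval q).2) \in @composable G by rewrite in_setE.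
have [A [B [Ao Bo Ah Bg HAB]]] :=
  continuous_box (gmul_continuous HG) Oo (Oq : O (_ (exist _ (h0, (sval q).2) Hcp))).
(* Near [q] the action is the product of an arrow of [A `&` theta s] with an arrow of [B]. *)
have SAo : open (src @` (A `&` theta s)).
  case: (hom_bisection s) => Ho _ _ Hs _.
  by apply: Hs; [exact: openI | move=> ? []].
exists (germ_set s (Uset (ssE s)) `*` (B `&` rng @^-1` (src @` (A `&` theta s)))); split.
- apply: openX; first by apply: open_germ_set => //; exact: open_Uset.
  by apply: openI => //; exact: (continuousP _).1 (grng_continuous HG) _ SAo.
- split; last by split => //=; exists h0.
  exists (sval (grep (sval q).1)).2, (proj2_sig (grep (sval q).1)).
  by split; [exact: (proj2_sig (grep (sval q).1)) | exact: germ'_grep].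
move=> q' [[phi [Hphi [_ Ek]]] [Bq' [b [Ab Tb] Eb]]].
rewrite /hom_act (hom_arrow_germ' Ek (hom_dom_src q') Tb Eb).
have Hc' : (b, (sval q').2) \in @composable G by rewrite in_setE.
exact: (HAB (exist (fun x => x \in composable (G := G)) (b, (sval q').2) Hc') Ab Bq').
Qed.

Definition morph_of_hom : alg_morph (germ_gpd S) G :=
  @AlgMorph (germ_gpd S) G hom_anchor hom_act hom_anchor_continuous hom_act_continuous
    hom_anchor_act hom_act_assoc hom_act_unit hom_anchor_mul hom_act_mul.

Lemma morph_of_hom_corresponds : corresponds morph_of_hom theta.
Proof.
move=> s g; split.
  move=> Tg; have Hx : char_at (hom_anchor (u (src g))) (ssE s).
    by rewrite /hom_anchor (grng_unit HG); exact: unit_char_src.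
  have Hd : (germ' Hx : gArr (germ_gpd S), u (src g)) \in act_dom (K := germ_gpd S) hom_anchor.
    by rewrite in_setE /act_dom /= Gsrc_germ'.
  exists (src g), Hx, Hd => /=.
  rewrite /hom_act /= (hom_arrow_germ' (erefl (germ' Hx)) _ Tg) ?(gmulg1 HG) //.
  - by rewrite Gsrc_germ'.
  - by rewrite (grng_unit HG).
move=> [x [Hx [Hd ->]]] /=.
have : theta (m (st s) s) (u x).
  by move: (Hx); rewrite /= /hom_anchor (grng_unit HG) => /unit_charE.
move=> /hom_unit_src_memP [h [Th Eh]].
rewrite /hom_act /= (hom_arrow_germ' (erefl (germ' Hx)) _ Th).
- by rewrite -Eh (gmulg1 HG).
- by rewrite Gsrc_germ'.
- by rewrite (grng_unit HG).
Qed.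

Section Uniqueness.
Variable a : alg_morph (germ_gpd S) G.
Hypothesis Ha : corresponds a theta.

Lemma corresponds_anchor g : am_rho a g = hom_anchor g.
Proof.
suff K x : am_rho a (u x) = unit_char x by rewrite -(am_rho_unit HG) K.
apply: Ehat_ext => e; have He := proj2_sig e.
have Hx : char_at (am_rho a (u x)) e = char_at (am_rho a (u x)) (ssE (sval e)).
  by apply: char_val => /=; rewrite isg_idem_star // He.
apply/idP/idP => [Hxe|/unit_charE /(Ha _ _).1 /bis_of_morphP [y [Hy Ey]]].
  have Hs : char_at (am_rho a (u x)) (ssE (sval e)) by rewrite -Hx.
  apply/unit_charE/(Ha _ _).2/bis_of_morphP; exists x, Hs.
  by rewrite /bis_arrow (germ'_idem Hs Hxe) am_app_unit.
have xy : x = y by rewrite -(gsrc_unit HG x) Ey (gsrc_bis_arrow HG).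
by subst y; rewrite Hx.
Qed.

Lemma corresponds_act k g (H : (k, g) \in act_dom (am_rho a)) :
  am_act (exist _ (k, g) H) = mul (hom_arrow (sval (grep k)).1 (rng g)) g.
Proof.
rewrite -am_appE.
have E : Gsrc k = am_rho a (u (rng g)).
  by move: H; rewrite in_setE /act_dom /= (am_rho_unit HG) => ->.
have Hs : char_at (am_rho a (u (rng g))) (ssE (sval (grep k)).1).
  by rewrite -E; exact: (proj2_sig (grep k)).
have Ek : k = germ' Hs by rewrite {1}(germ'_grep k); apply: germ'_ext.
have T : theta (sval (grep k)).1 (bis_arrow Hs).
  by apply: (Ha _ _).2; apply/bis_of_morphP; exists (rng g), Hs.
rewrite (hom_arrowP T (gsrc_bis_arrow HG Hs)).
have [_ K] := am_app_mul E (gsrc_unit HG (rng g)).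
by rewrite -{1}(gmul1g HG g) K /bis_arrow -Ek.
Qed.

End Uniqueness.

End HomToMorph.

Lemma alg_morph_ext (K H : gpd) (a1 a2 : alg_morph K H) :
  am_rho a1 = am_rho a2 ->
  (forall k g H1 H2, am_act (a := a1) (exist _ (k, g) H1) = am_act (a := a2) (exist _ (k, g) H2)) ->
  a1 = a2.
Proof.
case: a1 a2 => [r1 f1 ? ? ? ? ? ? ?] [r2 f2 ? ? ? ? ? ? ?] /= Er Ef; subst r2.
have Ef' : f1 = f2 by apply: funext => -[[k g] Hk]; apply: Ef.
by subst f2; congr AlgMorph; apply: Prop_irrelevance.
Qed.

Unset Implicit Arguments.

Theorem theorem4p11 (S : invSG) (G : gpd) :
  is_top_groupoid G -> etale G ->
  (forall a : alg_morph (germ_gpd S) G,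
      exists! theta : S -> set (gArr G), is_bis_hom theta /\ corresponds a theta) /\
  (forall theta : S -> set (gArr G), is_bis_hom theta ->
      exists! a : alg_morph (germ_gpd S) G, corresponds a theta).
Proof.
move=> HG HE; split.
- move=> a; exists (bis_of_morph a); split; first by split; [exact: bis_of_morph_hom|].
  move=> theta [_ Hc]; apply: funext => s; apply: funext => g; apply: propext.
  exact: iff_sym (Hc s g).
- move=> theta Hth; exists (morph_of_hom HG Hth); split; first exact: morph_of_hom_corresponds.
  move=> a Ha; apply: alg_morph_ext => [|k g H1 H2].
    by apply: funext => g; rewrite (corresponds_anchor HG Hth Ha).
  by rewrite (corresponds_act HG Hth Ha).
Qed.
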